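(* There is an absolute constant $C>0$ such that the following holds. Let $F$ be a distribution with PDF $f$, let $\epsilon>0$ and let $x_1<x_2<\dots<x_m$ be points. Suppose that for each $i$ we have numbers $F_i\in[0,1]$ with $F(x_i)\in[F_i-\epsilon,F_i+\epsilon]$, and that for each $i<m$ either $x_{i+1}-x_i\le\epsilon$, or there are numbers $\underline f_i\le\overline f_i$ with $f(x)\in[\underline f_i,\overline f_i]$ for all $x\in[x_i,x_{i+1}]$ and $(x_{i+1}-x_i)(\overline f_i-\underline f_i)\le\epsilon$. Let $F_{(1)}\le\dots\le F_{(m)}$ be the values $F_1,\dots,F_m$ sorted in non-decreasing order, and let $\hat F$ be the function with $\hat F(x_i)=F_{(i)}$ that is linear on each $[x_i,x_{i+1}]$. Then for all $v\in[x_1,x_m]$, $F(v-C\epsilon)-C\epsilon\le\hat F(v)\le F(v+C\epsilon)+C\epsilon$, i.e. $\hat F$ is within $O(\epsilon)$ Lévy distance of $F$ on $[x_1,x_m]$. *)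

From HB Require Import structures.
From mathcomp Require Import all_boot all_order all_algebra.
From mathcomp Require Import all_classical all_reals all_analysis.
Set Implicit Arguments. Unset Strict Implicit. Unset Printing Implicit Defensive.
Import Order.TTheory GRing.Theory Num.Theory.
Local Open Scope ring_scope.

(* The values Fs 0, ..., Fs (m-1) sorted in non-decreasing order:
   sorted_vals Fs m i = F_(i+1) (0-based). *)
Definition sorted_vals {R : realType} (Fs : nat -> R) (m : nat) (i : nat) : R :=
  nth 0 (sort (fun a b : R => a <= b) [seq Fs j | j <- iota 0 m]) i.

(* Piecewise-linear interpolation through the points (x i, G i), i < m:
   on the segment [x i, x (i+1)] (the first segment whose right end is >= v)
   it is linear; for m = 1 it is the value G 0. *)
Definition pl_interp {R : realType} (x G : nat -> R) (m : nat) (v : R) : R :=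
  let i := find (fun j => v <= x j.+1) (iota 0 m.-1) in
  if (i.+1 < m)%N then
    G i + (v - x i) / (x i.+1 - x i) * (G i.+1 - G i)
  else G i.

From HB Require Import structures.
From mathcomp Require Import all_boot all_order all_algebra.
From mathcomp Require Import all_classical all_reals all_analysis.
From mathcomp Require Import measurable_realfun ring lra zify.
Import Order.TTheory GRing.Theory Num.Theory.
Local Open Scope classical_set_scope.
Local Open Scope ring_scope.

(* On a segment [x_i, x_(i+1)] the interpolant is the linear interpolation
   lerp (G_i) (G_(i+1)) t, t = (v - x_i) / (x_(i+1) - x_i) in [0, 1], of the
   sorted values G_i.  Three general facts drive the proof:
   - sorting is 1-Lipschitz for the sup distance: since i |-> F (x_i) is
     non-decreasing and each F_i is eps-close to F (x_i), the i-th smallest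
     F_(i) is still eps-close to F (x_i);
   - a linear interpolation stays between common bounds of its endpoints,
     and moves by at most e when both endpoints move by at most e;
   - where the density lies in [lo, hi], the CDF deviates from its chord by
     at most (x_(i+1) - x_i) (hi - lo).
   On a short segment the interpolant is thus squeezed between F (x_i) - eps
   and F (x_(i+1)) + eps, on a segment with controlled density it is
   2 eps-close to F v; in both cases monotonicity of F gives the Levy bound. *)

Definition lerp {R : pzRingType} (a b t : R) : R := a + t * (b - a).

Section Lerp.
Context {R : realFieldType}.
Implicit Types a b c d e t : R.

Lemma lerp_bounds a b c d t : 0 <= t <= 1 ->
  c <= a <= d -> c <= b <= d -> c <= lerp a b t <= d.
Proof.
move=> /andP[t0 t1] /andP[ca ad] /andP[cb bd]; rewrite /lerp.
have h1 : 0 <= t * (b - c) by rewrite mulr_ge0 // subr_ge0.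
have h2 : 0 <= (1 - t) * (a - c) by rewrite mulr_ge0 // subr_ge0.
have h3 : 0 <= t * (d - b) by rewrite mulr_ge0 // subr_ge0.
have h4 : 0 <= (1 - t) * (d - a) by rewrite mulr_ge0 // subr_ge0.
apply/andP; split; nra.
Qed.

Lemma lerp_close {a b a' b' e t} : 0 <= t <= 1 ->
  a' - e <= a <= a' + e -> b' - e <= b <= b' + e ->
  lerp a' b' t - e <= lerp a b t <= lerp a' b' t + e.
Proof.
move=> t01 ha hb.
have diff : lerp a b t - lerp a' b' t = lerp (a - a') (b - b') t.
  by rewrite /lerp; ring.
have : - e <= lerp (a - a') (b - b') t <= e by apply: lerp_bounds => //; lra.
by rewrite -diff; lra.
Qed.

Lemma lerp_param_01 {a b v} : a < b -> a <= v <= b -> 0 <= (v - a) / (b - a) <= 1.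
Proof.
move=> ab /andP[av vb]; have ba : 0 < b - a by rewrite subr_gt0.
rewrite ler_pdivrMr // mul1r divr_ge0 ?subr_ge0 ?(ltW ba) //=; lra.
Qed.

Lemma levy_sandwich {F : R -> R} {v e} c a b {y} :
  {homo F : s u / s <= u} -> v - e <= a -> b <= v + e -> c <= e ->
  F a - c <= y <= F b + c -> F (v - e) - e <= y <= F (v + e) + e.
Proof.
move=> Fmono va bv ce /andP[ya yb].
have := Fmono _ _ va; have := Fmono _ _ bv.
by move=> h1 h2; apply/andP; split; lra.
Qed.
End Lerp.

Section Sort.
Variable R : realDomainType.
Let le := fun a b : R => a <= b.

Lemma nth_le_of_count (s : seq R) k (c : R) : sorted le s ->
  (k < count (fun y : R => (y <= c)%R) s)%N -> nth 0 s k <= c.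
Proof.
move=> ss hc; rewrite leNgt; apply/negP => ck.
have hk : (k < size s)%N by exact: leq_trans hc (count_size _ _).
move: hc; rewrite -(cat_take_drop k s) count_cat.
have -> : count (fun y => y <= c) (drop k s) = 0%N.
  rewrite (@eq_in_count _ _ pred0) ?count_pred0 // => y /(nthP 0) [j].
  rewrite size_drop => hj <-; rewrite nth_drop /=.
  apply/negbTE; rewrite -ltNge; apply: (lt_le_trans ck).
  apply: (sorted_leq_nth le_trans lexx) => //; rewrite ?inE /=;
    [by rewrite -ltn_subRL | exact: leq_addr].
rewrite addn0 => h; have := leq_trans h (count_size _ _).
by rewrite size_take hk ltnn.
Qed.

Lemma le_nth_of_count (s : seq R) k (c : R) : sorted le s -> (k < size s)%N ->
  (count (fun y : R => (y < c)%R) s <= k)%N -> c <= nth 0 s k.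
Proof.
move=> ss hk hc; rewrite leNgt; apply/negP => kc.
have h : count (fun y => y < c) (take k.+1 s) = k.+1.
  rewrite (@eq_in_count _ _ predT) ?count_predT ?size_takel //.
  move=> y /(nthP 0) [j]; rewrite size_takel // => hj <-; rewrite nth_take //=.
  apply: le_lt_trans kc.
  apply: (sorted_leq_nth le_trans lexx) => //; rewrite ?inE /=; exact: leq_trans hj hk.
move: hc; rewrite -(cat_take_drop k.+1 s) count_cat h; lia.
Qed.
End Sort.

Lemma sorted_vals_close {R : realType} (Fs a : nat -> R) (m : nat) (eps : R) i :
  {in gtn m &, {homo a : j k / (j <= k)%N >-> j <= k}} ->
  (forall j, (j < m)%N -> Fs j - eps <= a j <= Fs j + eps) ->
  (i < m)%N -> a i - eps <= sorted_vals Fs m i <= a i + eps.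
Proof.
move=> amono hFs him; rewrite /sorted_vals.
set s := sort _ _.
have ss : sorted (fun a b : R => a <= b) s
  by apply: sort_sorted => y z; exact: le_total.
have cnt P : count P s = count (fun j => P (Fs j)) (iota 0 m).
  by rewrite (permP (permEl (perm_sort _ _))) count_map.
apply/andP; split.
- (* only the indices j < i can have Fs j < a i - eps *)
  apply: le_nth_of_count => //; first by rewrite size_sort size_map size_iota.
  rewrite cnt -(subnKC (ltnW him)) iotaD count_cat.
  rewrite (@eq_in_count _ _ pred0 (iota (0 + i) _)) ?count_pred0.
    by rewrite addn0; apply: leq_trans (count_size _ _) _; rewrite size_iota.
  move=> j; rewrite mem_iota => /andP[ij jm] /=.
  have hjm : (j < m)%N by lia.
  have := hFs j hjm; have := amono i j him hjm ij.
  by move=> aij /andP[_ h]; apply/negbTE; rewrite -leNgt; lra.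
- (* all the indices j <= i have Fs j <= a i + eps *)
  apply: nth_le_of_count => //.
  rewrite cnt -(subnKC him) iotaD count_cat.
  rewrite (@eq_in_count _ _ predT (iota 0 i.+1)) ?count_predT ?size_iota; first lia.
  move=> j; rewrite mem_iota => /andP[_ ji] /=.
  have hjm : (j < m)%N by lia.
  have := hFs j hjm; have := amono j i hjm him (ltnSE ji).
  by move=> aji /andP[h _]; lra.
Qed.

Lemma pl_interp_cases {R : realType} (x G : nat -> R) m v :
  (0 < m)%N -> x 0%N <= v <= x m.-1 ->
  (exists i, [/\ (i.+1 < m)%N, x i <= v <= x i.+1 &
     pl_interp x G m v = lerp (G i) (G i.+1) ((v - x i) / (x i.+1 - x i))])
  \/ (m = 1%N /\ pl_interp x G m v = G 0%N).
Proof.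
move=> m0 /andP[v0 vm]; rewrite /pl_interp.
set P := (fun j => v <= x j.+1); set i := find P (iota 0 m.-1).
case: ifP => hi.
- left; exists i; split => //; apply/andP; split.
  + (* the segment before the i-th one ends strictly left of v *)
    case Ei: i => [|i'] //.
    have hb : (i' < find P (iota 0 m.-1))%N by rewrite -/i Ei.
    have := before_find 0%N hb; rewrite nth_iota; last by lia.
    by rewrite /P add0n => /negbT; rewrite -ltNge => /ltW.
  + have hh : has P (iota 0 m.-1) by rewrite has_find size_iota -/i; lia.
    by have := nth_find 0%N hh; rewrite -/i nth_iota ?add0n //; lia.
- right; suff m1 : m = 1%N by rewrite /i m1.
  apply/eqP; rewrite eqn_leq m0 andbT leqNgt; apply/negP => m2.
  have : has P (iota 0 m.-1).
    apply/hasP; exists m.-2; first by rewrite mem_iota; lia.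
    by rewrite /P (_ : m.-2.+1 = m.-1) //; lia.
  by rewrite has_find size_iota -/i; move: hi; lia.
Qed.

Section Distribution.
Context {R : realType} {F f : R -> R}.
Hypothesis f_meas : measurable_fun setT f.
Hypothesis f_ge0 : forall t, 0 <= f t.
Hypothesis F_def :
  forall y, (\int[@lebesgue_measure R]_(t in `]-oo, y]) (f t)%:E = (F y)%:E)%E.

Lemma cdf_increment {a b} : a <= b ->
  ((F b)%:E = (F a)%:E + \int[@lebesgue_measure R]_(t in `]a, b]) (f t)%:E)%E.
Proof.
move=> ab; rewrite -!F_def.
rewrite (@itv_bndbnd_setU _ _ -oo%O (BRight a) (BRight b)) //.
rewrite ge0_integral_setU //=.
- apply/measurable_EFinP; exact: measurable_funTS.
- by move=> t _; rewrite lee_fin.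
- apply/disj_setPS => t /= []; rewrite !in_itv /= => ta /andP[at' _].
  by move: (lt_le_trans at' ta); rewrite ltxx.
Qed.

Lemma cdf_nondecreasing : {homo F : a b / a <= b}.
Proof.
move=> a b ab; rewrite -lee_fin (cdf_increment ab) leeDl //.
by apply: integral_ge0 => t _; rewrite lee_fin.
Qed.

Lemma cdf_increment_bounds {a b lo hi} : a <= b ->
  (forall t, a <= t <= b -> lo <= f t <= hi) ->
  (b - a) * lo <= F b - F a <= (b - a) * hi.
Proof.
move=> ab hf; have [<-|anb] := eqVneq a b; first by rewrite !subrr !mul0r lexx.
have itv_meas : lebesgue_measure (`]a, b] : set R) = (b - a)%:E.
  by rewrite lebesgue_measure_itv /= lte_fin lt_neqAle anb ab -EFinD.
have int_cst r : (\int[@lebesgue_measure R]_(t in `]a, b]) (cst r) t = r * (b - a)%:E)%E.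
  by rewrite integral_cst //; congr (_ * _)%E; exact: itv_meas.
have int_f : (\int[@lebesgue_measure R]_(t in `]a, b]) (f t)%:E)%E = (F b - F a)%:E.
  by rewrite EFinB (cdf_increment ab) addeAC subee // add0e.
have f_itv t : a < t <= b -> lo <= f t <= hi.
  by move=> /andP[at' tb]; apply: hf; rewrite (ltW at') tb.
have ba : 0 <= b - a by rewrite subr_ge0.
have itv_mble : measurable (`]a, b] : set R) by exact: measurable_itv.
have f_mble : measurable_fun (`]a, b] : set R) (fun t => (f t)%:E).
  by apply/measurable_EFinP; exact: measurable_funTS.
apply/andP; split.
- (* compare with the non-negative constant max lo 0 *)
  have : (\int[@lebesgue_measure R]_(t in `]a, b]) (cst (Num.max lo 0)%:E) t <=
          \int[@lebesgue_measure R]_(t in `]a, b]) (f t)%:E)%E.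
    apply: ge0_le_integral => //.
    + by move=> t _; rewrite /= lee_fin le_max lexx orbT.
    + move=> t /=; rewrite in_itv /= => /f_itv /andP[lof _].
      by rewrite lee_fin ge_max lof f_ge0.
  rewrite int_cst int_f -EFinM lee_fin; apply: le_trans.
  by rewrite mulrC ler_wpM2r // le_max lexx.
- have : (\int[@lebesgue_measure R]_(t in `]a, b]) (f t)%:E <=
          \int[@lebesgue_measure R]_(t in `]a, b]) (cst hi%:E) t)%E.
    apply: ge0_le_integral => //.
    + by move=> t _; rewrite lee_fin.
    + by move=> t /=; rewrite in_itv /= => /f_itv /andP[_ fhi]; rewrite lee_fin.
  by rewrite int_cst int_f -EFinM lee_fin mulrC.
Qed.

Lemma cdf_chord_close {a b v lo hi eps} : a < b -> a <= v <= b ->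
  (forall t, a <= t <= b -> lo <= f t <= hi) -> (b - a) * (hi - lo) <= eps ->
  F v - eps <= lerp (F a) (F b) ((v - a) / (b - a)) <= F v + eps.
Proof.
move=> ab v_ab hf small; rewrite /lerp.
set t := (v - a) / (b - a).
have ba : 0 < b - a by rewrite subr_gt0.
have /andP[t0 _] := lerp_param_01 ab v_ab.
have /andP[av vb] := v_ab.
have tba : t * (b - a) = v - a by rewrite /t divfK // lt0r_neq0.
have /andP[lo_av hi_av] : (v - a) * lo <= F v - F a <= (v - a) * hi.
  apply: cdf_increment_bounds => // s /andP[as' sv].
  by apply: hf; rewrite as' (le_trans sv vb).
have /andP[lo_ab hi_ab] := cdf_increment_bounds (ltW ab) hf.
have lohi : lo <= hi.
  have /andP[lo_fa fa_hi] : lo <= f a <= hi by apply: hf; rewrite lexx ltW.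
  exact: le_trans lo_fa fa_hi.
have p1 : 0 <= t * (F b - F a - (b - a) * lo) by rewrite mulr_ge0 // subr_ge0.
have p2 : 0 <= t * ((b - a) * hi - (F b - F a)) by rewrite mulr_ge0 // subr_ge0.
have p3 : 0 <= ((b - a) - (v - a)) * (hi - lo).
  by apply: mulr_ge0; rewrite subr_ge0; lra.
have q1 : t * (b - a) * lo = (v - a) * lo by rewrite tba.
have q2 : t * (b - a) * hi = (v - a) * hi by rewrite tba.
apply/andP; split; nra.
Qed.
End Distribution.

Theorem lemma1 :
  exists C : nat, (0 < C)%N /\
  forall (R : realType) (F f : R -> R) (eps : R) (m : nat) (x Fs : nat -> R),
    (* F is a distribution with PDF f *)
    measurable_fun setT f ->
    (forall t, 0 <= f t) ->
    (\int[@lebesgue_measure R]_(t in setT) (f t)%:E = 1)%E ->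
    (forall y, \int[@lebesgue_measure R]_(t in `]-oo, y]) (f t)%:E = (F y)%:E)%E ->
    0 < eps ->
    (0 < m)%N ->
    (forall i, (i.+1 < m)%N -> x i < x i.+1) ->
    (forall i, (i < m)%N -> 0 <= Fs i <= 1) ->
    (forall i, (i < m)%N -> Fs i - eps <= F (x i) <= Fs i + eps) ->
    (forall i, (i.+1 < m)%N ->
       x i.+1 - x i <= eps \/
       exists flo fhi : R, flo <= fhi /\
         (forall t, x i <= t <= x i.+1 -> flo <= f t <= fhi) /\
         (x i.+1 - x i) * (fhi - flo) <= eps) ->
    forall v, x 0 <= v <= x m.-1 ->
      F (v - C%:R * eps) - C%:R * eps
        <= pl_interp x (sorted_vals Fs m) m v
        <= F (v + C%:R * eps) + C%:R * eps.
Proof.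
exists 2%N; split => //.
move=> R F f eps m x Fs f_meas f_ge0 _ F_def eps0 m0 x_incr _ hFs hseg v hv.
have F_mono := cdf_nondecreasing f_meas f_ge0 F_def.
have x_mono : {in gtn m &, {homo x : j k / (j <= k)%N >-> j <= k}}.
  apply: Order.NatMonotonyTheory.nondecn_inP => [j k _ k_lt_m l /andP[_ l_lt_k]|j _].
  - by rewrite inE in k_lt_m *; exact: ltn_trans l_lt_k k_lt_m.
  - by rewrite inE => j1_lt_m; exact/ltW/x_incr.
have G_close i : (i < m)%N ->
    F (x i) - eps <= sorted_vals Fs m i <= F (x i) + eps.
  move=> im; apply: (sorted_vals_close Fs (fun j => F (x j))) im => [j k jm km jk|j jm].
  - exact/F_mono/x_mono.
  - by have := hFs j jm; lra.
have eps2 : eps <= 2%:R * eps by lra.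
have [[i [im v_seg ->]] | [m1 ->]] := pl_interp_cases x (sorted_vals Fs m) m v m0 hv.
- have xi_lt := x_incr i im.
  have t01 := lerp_param_01 xi_lt v_seg.
  have /andP[xiv vxi] := v_seg.
  have [short | [lo [hi [_ [f_bnd small]]]]] := hseg i im.
  + (* short segment: squeezed between F (x i) - eps and F (x (i+1)) + eps *)
    apply: (levy_sandwich eps (x i) (x i.+1)) => //; try lra.
    have Fi := F_mono _ _ (ltW xi_lt).
    have /andP[g1 g2] := G_close i (ltnW im).
    have /andP[g3 g4] := G_close i.+1 im.
    by apply: lerp_bounds => //; lra.
  + (* controlled density: within 2 eps of F v *)
    apply: (levy_sandwich (2%:R * eps) v v) => //; try lra.
    have /andP[c1 c2] := cdf_chord_close f_meas f_ge0 F_def xi_lt v_seg f_bnd small.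
    have /andP[d1 d2] := lerp_close t01 (G_close i (ltnW im)) (G_close i.+1 im).
    by apply/andP; split; lra.
-
  have -> : v = x 0%N by apply/eqP; rewrite eq_le andbC; rewrite m1 in hv.
  by apply: (levy_sandwich eps (x 0%N) (x 0%N)) (G_close 0%N m0) => //; lra.
Qed.
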